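(* Let $(A,B,R)$ be a normalized formal context and $(X,Y)\in\mathcal{C}_N$ with $X\neq\varnothing$ and $X\neq B$. If $X^{\uparrow}\neq\varnothing$, then $\langle X,X^{\uparrow}\rangle$ is a coatom of the concept lattice $\mathcal{C}(A,B,R)$, i.e. there is no formal concept $\langle X_0,Y_0\rangle$ with $X\subsetneq X_0\subsetneq B$.
   Context: A formal context is a triple $(A,B,R)$ with $R\subseteq A\times B$. Derivation operators: $X^{\uparrow}=\{a\in A\mid (a,b)\in R \text{ for all } b\in X\}$ for $X\subseteq B$ and $Y^{\downarrow}=\{b\in B\mid (a,b)\in R \text{ for all } a\in Y\}$ for $Y\subseteq A$; a formal concept is a pair $\langle X,Y\rangle$ with $X^\uparrow=Y$, $Y^\downarrow=X$, and $\mathcal{C}(A,B,R)$ is the set of formal concepts ordered by inclusion of extents, whose top element is $\langle B,\varnothing\rangle$ for a normalized context. A coatom is an element covered by the top element. Necessity operators: $X^{\uparrow_N}=\{a\in A\mid \text{for all } b\in B,\ (a,b)\in R\Rightarrow b\in X\}$ and $Y^{\downarrow^N}=\{b\in B\mid \text{for all } a\in A,\ (a,b)\in R\Rightarrow a\in Y\}$. $\mathcal{C}_N=\{(X,Y)\mid X\subseteq B,\ Y\subseteq A,\ X^{\uparrow_N}=Y,\ Y^{\downarrow^N}=X\}$. The context is normalized if for every $a\in A$ there are $b,b'\in B$ with $(a,b)\in R$, $(a,b')\notin R$, and for every $b\in B$ there are $a,a'\in A$ with $(a,b)\in R$, $(a',b)\notin R$. *)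

From mathcomp Require Import all_boot.
From mathcomp Require Import boolp classical_sets.
Set Implicit Arguments. Unset Strict Implicit. Unset Printing Implicit Defensive.
Local Open Scope classical_set_scope.

Section FCA.
Variables (A B : Type) (R : A -> B -> Prop).

Definition fup (X : set B) : set A := [set a | forall b, X b -> R a b].
Definition fdown (Y : set A) : set B := [set b | forall a, Y a -> R a b].

Definition fupN (X : set B) : set A := [set a | forall b, R a b -> X b].
Definition fdownN (Y : set A) : set B := [set b | forall a, R a b -> Y a].

Definition is_concept (X : set B) (Y : set A) : Prop :=
  fup X = Y /\ fdown Y = X.

Definition in_CN (X : set B) (Y : set A) : Prop :=
  fupN X = Y /\ fdownN Y = X.

Definition normalized : Prop :=
  (forall a, (exists b, R a b) /\ (exists b', ~ R a b')) /\
  (forall b, (exists a, R a b) /\ (exists a', ~ R a' b)).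

(* <X,Y> is a coatom of C(A,B,R) (order = inclusion of the X-components,
   top = <B, ∅>): it is a concept different from the top, and no concept
   lies strictly between it and the top. *)
Definition is_coatom (X : set B) (Y : set A) : Prop :=
  is_concept X Y /\ X <> setT /\
  forall X0 Y0, is_concept X0 Y0 -> X `<` X0 -> X0 = setT.

End FCA.

From mathcomp Require Import all_boot.
From mathcomp Require Import boolp classical_sets.
Set Implicit Arguments. Unset Strict Implicit. Unset Printing Implicit Defensive.
Local Open Scope classical_set_scope.

(* Every a in X^up is related to some b0 in X = Y^downN, hence lies in
   Y = X^upN: all attributes of a are in X. So X^up^down = X, and a concept
   with extent strictly above X can have no object at all, i.e. it is the
   top concept <B, ∅>. *)

Section CoatomFromNecessity.
Variables (A B : Type) (R : A -> B -> Prop).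

Lemma sub_fdown_fup (X : set B) : X `<=` fdown R (fup R X).
Proof. by move=> b Xb a Ha; exact: Ha b Xb. Qed.

Lemma fup_subset (X X0 : set B) : X `<=` X0 -> fup R X0 `<=` fup R X.
Proof. by move=> sXX0 a Ha b Xb; exact: Ha b (sXX0 b Xb). Qed.

Lemma fdown_set0 : fdown R set0 = setT.
Proof. by apply/seteqP; split=> // b _ a []. Qed.

Lemma fup_sub_fupN (X : set B) (Y : set A) :
  in_CN R X Y -> X !=set0 -> fup R X `<=` fupN R X.
Proof.
move=> [<- XE] [b0 Xb0] a Ha.
have : fdownN R (fupN R X) b0 by rewrite XE.
by move/(_ a (Ha b0 Xb0)).
Qed.

Section UpClosed.
Variable X : set B.
Hypothesis fup_fupN : fup R X `<=` fupN R X.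

Lemma is_concept_fup : fup R X !=set0 -> is_concept R X (fup R X).
Proof.
move=> [a0 Ha0]; split=> //; apply/seteqP; split; last exact: sub_fdown_fup.
by move=> b Hb; exact: fup_fupN Ha0 b (Hb a0 Ha0).
Qed.

Lemma concept_above_eq_top (X0 : set B) (Y0 : set A) :
  is_concept R X0 Y0 -> X `<` X0 -> X0 = setT.
Proof.
move=> [<- X0E] [sXX0 nX0X]; rewrite -X0E -fdown_set0; congr fdown.
apply/seteqP; split=> // a Ha; apply: nX0X => b X0b.
exact: fup_fupN (fup_subset sXX0 Ha) b (Ha b X0b).
Qed.

End UpClosed.
End CoatomFromNecessity.

Theorem mainTheorem6 (A B : Type) (R : A -> B -> Prop) (X : set B) (Y : set A) :
  normalized R ->
  in_CN R X Y ->
  X <> set0 -> X <> setT ->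
  fup R X <> set0 ->
  is_coatom R X (fup R X).
Proof.
move=> _ XY /eqP/set0P X_neq0 XT /eqP/set0P up_neq0.
have fup_fupN := fup_sub_fupN XY X_neq0.
split; first exact: is_concept_fup.
by split=> // X0 Y0; exact: concept_above_eq_top.
Qed.
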